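(* Let $\mathcal{X},\mathcal{Y}$ be finite sets, $\mathcal{S}\subseteq\mathcal{X}\times\mathcal{Y}$, and $f:\mathcal{S}\to\{0,1\}$ with $f^{-1}(0)$ and $f^{-1}(1)$ both nonempty. Let $\sigma$ be the uniform distribution on $\mathcal{X}\times\mathcal{Y}$ and, for $b\in\{0,1\}$, $\sigma_b$ the uniform distribution on $f^{-1}(b)$. Suppose $c>0$ is such that for every rectangle $R\subseteq\mathcal{X}\times\mathcal{Y}$ and every $b\in\{0,1\}$, $$\sigma_b(R\cap f^{-1}(b))\ge0.8\,\sigma(R)-c.$$ Then for every $\varepsilon\ge0$, $\overline{\mathrm{prt}}_\varepsilon(f)\ge\frac{1}{c}(0.8-2.8\varepsilon)$.
   Context: Rectangles are $A\times B$ with $A\subseteq\mathcal{X}$, $B\subseteq\mathcal{Y}$ (including the empty one). For a distribution $\mu$ on $\mathcal{X}\times\mathcal{Y}$, $\overline{\mathrm{prt}}^\mu_\varepsilon(f)$ is the value of: minimize $1/\eta$ over $\eta>0$ and $p_{R,z}\ge0$ ($R$ all rectangles, $z\in\{0,1\}$) s.t. (i) $\sum_{(x,y)\in\mathcal{S}}\mu(x,y)\sum_{R\ni(x,y)}p_{R,f(x,y)}+\sum_{(x,y)\notin\mathcal{S}}\mu(x,y)\sum_{z,R\ni(x,y)}p_{R,z}\ge(1-\varepsilon)\eta$; (ii) $\forall(x,y)\in\mathcal{X}\times\mathcal{Y}$: $\sum_{z,R\ni(x,y)}p_{R,z}\le\eta$; (iii) $\sum_{R,z}p_{R,z}=1$.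 $\overline{\mathrm{prt}}_\varepsilon(f)=\max_\mu\overline{\mathrm{prt}}^\mu_\varepsilon(f)$. *)

From HB Require Import structures.
From mathcomp Require Import all_boot all_order all_algebra.
Set Implicit Arguments. Unset Strict Implicit. Unset Printing Implicit Defensive.
Import Order.TTheory GRing.Theory Num.Theory.
Local Open Scope ring_scope.

Section Defs.
Variables (R : realFieldType) (X Y : finType).

Definition is_rect (Rt : {set X * Y}) : bool :=
  [exists A : {set X}, exists B : {set Y}, Rt == setX A B].

(* f^{-1}(b), for f defined on S (values of f outside S are irrelevant). *)
Definition fpre (S : {set X * Y}) (f : X * Y -> bool) (b : bool) : {set X * Y} :=
  [set u in S | f u == b].

Definition unif (D E : {set X * Y}) : R := (#|E :&: D|)%:R / (#|D|)%:R.

Definition is_distr (mu : X * Y -> R) : Prop :=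
  (forall u, 0 <= mu u) /\ \sum_u mu u = 1.

Definition cover (p : {set X * Y} -> bool -> R) (u : X * Y) (z : bool) : R :=
  \sum_(Rt : {set X * Y} | is_rect Rt && (u \in Rt)) p Rt z.

(* feasibility of (eta, p) for the LP defining prt^mu_eps(f) *)
Definition prt_feasible (mu : X * Y -> R) (S : {set X * Y}) (f : X * Y -> bool)
  (eps eta : R) (p : {set X * Y} -> bool -> R) : Prop :=
  [/\ 0 < eta,
      (forall Rt z, is_rect Rt -> 0 <= p Rt z),
      \sum_(u in S) mu u * cover p u (f u)
        + \sum_(u in ~: S) mu u * (\sum_(z : bool) cover p u z) >= (1 - eps) * eta,
      (forall u, \sum_(z : bool) cover p u z <= eta)
    & \sum_(Rt : {set X * Y} | is_rect Rt) \sum_(z : bool) p Rt z = 1].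

(* "prt_eps(f) = max_mu min_{feasible} 1/eta  >=  t" *)
Definition prt_ge (S : {set X * Y}) (f : X * Y -> bool) (eps t : R) : Prop :=
  exists mu : X * Y -> R, is_distr mu /\
    forall (eta : R) (p : {set X * Y} -> bool -> R),
      prt_feasible mu S f eps eta p -> t <= 1 / eta.

End Defs.

From Pilot Require Import Defs.
From HB Require Import structures.
From mathcomp Require Import all_boot all_order all_algebra.
From mathcomp Require Import ring lra.
Set Implicit Arguments. Unset Strict Implicit. Unset Printing Implicit Defensive.
Import Order.TTheory GRing.Theory Num.Theory.
Local Open Scope ring_scope.

(* Proof strategy: a weighted corruption bound.
   1. For ANY weighting mu and any nonnegative "penalty" w, a feasible
      solution (eta, p) of the LP defining prt^mu_eps satisfies
        (1 - eps - sum w) * eta <= B,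
      provided every labelled rectangle (Rt, z) has
        sum_{u in Rt} (mu u * [z is correct on u] - w u) <= B.
      Indeed, averaging this over p (constraint (iii)) and exchanging sums
      gives  LHS of (i) - sum_u w u * (cover of u) <= B, while (ii) bounds the
      penalty term by (sum w) * eta.
   2. We apply it to mu = 5/14 sigma_0 + 5/14 sigma_1 + 2/7 sigma with
      penalty w = 5/14 (sigma_0 + sigma_1): on a rectangle labelled z the
      excess is at most 2/7 sigma(Rt) - 5/14 sigma_{~z}(Rt) <= 5/14 c by the
      hypothesis, and sum w = 5/7.  Hence (2/7 - eps) eta <= 5/14 c, i.e.
      1/eta >= (4/5 - 14/5 eps)/c. *)

Lemma sum_indicator (R : numDomainType) (T : finType) (A B : {set T}) :
  \sum_(u in A) ((u \in B)%:R : R) = (#|A :&: B|)%:R.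
Proof.
rewrite -sum1_card natr_sum big_mkcond [RHS]big_mkcond /=.
by apply: eq_bigr => u _; rewrite inE; case: (u \in A); case: (u \in B).
Qed.

(* Defs.cover is written qualified, since finset also defines a cover. *)
Section CorruptionBound.
Variables (R : realFieldType) (X Y : finType) (S : {set X * Y}) (f : X * Y -> bool).

Definition correct (u : X * Y) (z : bool) : bool := (u \notin S) || (f u == z).

Lemma success_mass_correct (mu : X * Y -> R) (p : {set X * Y} -> bool -> R) :
  \sum_(u in S) mu u * Defs.cover p u (f u)
    + \sum_(u in ~: S) mu u * (\sum_(z : bool) Defs.cover p u z)
  = \sum_u \sum_(z : bool) mu u * (correct u z)%:R * Defs.cover p u z.
Proof.
rewrite [RHS](bigID (fun u => u \in S)) /=; congr (_ + _).
  apply: eq_bigr => u uS; rewrite big_bool /correct uS /=.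
  by case: (f u); rewrite /= ?mulr1 ?mulr0 ?mul0r ?addr0 ?add0r.
apply: eq_big => [u | u uS]; first by rewrite inE.
rewrite inE in uS; rewrite /correct uS mulr_sumr.
by apply: eq_bigr => z _; rewrite mulr1.
Qed.

Lemma sum_rects_cover (p : {set X * Y} -> bool -> R) (phi : X * Y -> bool -> R) :
  \sum_(Rt | is_rect Rt) \sum_(z : bool) p Rt z * (\sum_(u in Rt) phi u z)
  = \sum_u \sum_(z : bool) phi u z * Defs.cover p u z.
Proof.
rewrite exchange_big [RHS]exchange_big /=; apply: eq_bigr => z _.
under eq_bigr do rewrite mulr_sumr.
rewrite (exchange_big_dep predT) //=; apply: eq_bigr => u _.
by rewrite /Defs.cover mulr_sumr; apply: eq_bigr => Rt _; apply: mulrC.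
Qed.

Lemma average_le (p h : {set X * Y} -> bool -> R) (B : R) :
  (forall Rt z, is_rect Rt -> 0 <= p Rt z) ->
  \sum_(Rt | is_rect Rt) \sum_(z : bool) p Rt z = 1 ->
  (forall Rt z, is_rect Rt -> h Rt z <= B) ->
  \sum_(Rt | is_rect Rt) \sum_(z : bool) p Rt z * h Rt z <= B.
Proof.
move=> p_ge0 p_sum1 h_le.
rewrite -[leRHS]mul1r -p_sum1 mulr_suml; apply: ler_sum => Rt isR.
by rewrite mulr_suml; apply: ler_sum => z _; rewrite ler_wpM2l ?p_ge0 ?h_le.
Qed.

Lemma weighted_cover_le (w : X * Y -> R) (p : {set X * Y} -> bool -> R) (eta : R) :
  (forall u, 0 <= w u) -> (forall u, \sum_(z : bool) Defs.cover p u z <= eta) ->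
  \sum_u w u * (\sum_(z : bool) Defs.cover p u z) <= (\sum_u w u) * eta.
Proof.
by move=> w_ge0 cov_le; rewrite mulr_suml; apply: ler_sum => u _; rewrite ler_wpM2l.
Qed.

Lemma corruption_bound (mu w : X * Y -> R) (B eps eta : R)
    (p : {set X * Y} -> bool -> R) :
  (forall u, 0 <= w u) ->
  (forall Rt z, is_rect Rt ->
     \sum_(u in Rt) (mu u * (correct u z)%:R - w u) <= B) ->
  prt_feasible mu S f eps eta p ->
  (1 - eps - \sum_u w u) * eta <= B.
Proof.
move=> w_ge0 rect_le [_ p_ge0 success cov_le p_sum1].
have avg := average_le p_ge0 p_sum1 rect_le.
rewrite sum_rects_cover in avg.
have split_excess : \sum_u \sum_(z : bool)
      (mu u * (correct u z)%:R - w u) * Defs.cover p u z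
    = \sum_u \sum_(z : bool) mu u * (correct u z)%:R * Defs.cover p u z
      - \sum_u w u * (\sum_(z : bool) Defs.cover p u z).
  rewrite -sumrB; apply: eq_bigr => u _.
  by rewrite mulr_sumr -sumrB; apply: eq_bigr => z _; rewrite mulrBl.
have penalty := weighted_cover_le w_ge0 cov_le.
rewrite success_mass_correct in success.
rewrite split_excess in avg.
lra.
Qed.

End CorruptionBound.

Section HardDistribution.
Variables (R : realFieldType) (X Y : finType).

Definition density (D : {set X * Y}) (u : X * Y) : R := (u \in D)%:R / (#|D|)%:R.

Lemma density_ge0 (D : {set X * Y}) (u : X * Y) : 0 <= density D u.
Proof. by rewrite /density divr_ge0 ?ler0n. Qed.

Lemma sum_density (D E : {set X * Y}) : \sum_(u in E) density D u = unif R D E.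
Proof. by rewrite /density -mulr_suml sum_indicator. Qed.

Lemma sum_density_all (D : {set X * Y}) : (exists u, u \in D) ->
  \sum_u density D u = 1.
Proof.
move=> [u uD].
have -> : \sum_v density D v = \sum_(v in [set: X * Y]) density D v.
  by apply: eq_bigl => v; rewrite inE.
rewrite sum_density /unif setTI divff //.
by rewrite pnatr_eq0 -lt0n; apply/card_gt0P; exists u.
Qed.

Variables (S : {set X * Y}) (f : X * Y -> bool).

Definition hard_penalty (u : X * Y) : R :=
  5%:R / 14%:R * (density (fpre S f false) u + density (fpre S f true) u).

Definition hard_distr (u : X * Y) : R :=
  hard_penalty u + 2%:R / 7%:R * density [set: X * Y] u.

Lemma hard_penalty_ge0 (u : X * Y) : 0 <= hard_penalty u.
Proof. by rewrite /hard_penalty mulr_ge0 ?addr_ge0 ?divr_ge0 ?ler0n ?density_ge0. Qed.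

Hypotheses (F0 : exists u, u \in fpre S f false) (F1 : exists u, u \in fpre S f true).

Lemma sum_hard_penalty : \sum_u hard_penalty u = 5%:R / 7%:R.
Proof.
rewrite -mulr_sumr big_split /= !sum_density_all //; lra.
Qed.

Lemma hard_distr_is_distr : is_distr hard_distr.
Proof.
split=> [u | ].
  have := hard_penalty_ge0 u; have := density_ge0 [set: X * Y] u.
  rewrite /hard_distr; lra.
have [u uF0] := F0.
rewrite big_split /= sum_hard_penalty -mulr_sumr sum_density_all; last by exists u.
lra.
Qed.

Lemma hard_excess_pointwise (z : bool) (u : X * Y) :
  hard_distr u * (correct S f u z)%:R - hard_penalty u
  <= 2%:R / 7%:R * density [set: X * Y] u - 5%:R / 14%:R * density (fpre S f (~~ z)) u.
Proof.
have d0 := density_ge0 [set: X * Y] u.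
have dF0 := density_ge0 (fpre S f false) u.
have dF1 := density_ge0 (fpre S f true) u.
rewrite /hard_distr /hard_penalty /correct /density /fpre !inE in d0 dF0 dF1 *.
by case: (u \in S); case: (f u); case: z;
  rewrite /= ?mul0r ?mulr0 ?mulr1 in d0 dF0 dF1 *; lra.
Qed.

Lemma hard_rect_excess (c : R) :
  (forall (Rt : {set X * Y}) (b : bool), is_rect Rt ->
     unif R (fpre S f b) (Rt :&: fpre S f b) >= 4%:R / 5%:R * unif R [set: X * Y] Rt - c) ->
  forall Rt z, is_rect Rt ->
    \sum_(u in Rt) (hard_distr u * (correct S f u z)%:R - hard_penalty u)
      <= 5%:R / 14%:R * c.
Proof.
move=> disc Rt z isR.
apply: le_trans (ler_sum _ (fun u _ => hard_excess_pointwise z u)) _.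
rewrite sumrB -!mulr_sumr !sum_density.
have := disc Rt (~~ z) isR.
rewrite /unif -setIA setIid.
lra.
Qed.

End HardDistribution.

Theorem mainTheorem8 (R : realFieldType) (X Y : finType)
  (S : {set X * Y}) (f : X * Y -> bool) (c : R) :
  (exists u, u \in fpre S f false) ->
  (exists u, u \in fpre S f true) ->
  0 < c ->
  (forall (Rt : {set X * Y}) (b : bool), is_rect Rt ->
     unif R (fpre S f b) (Rt :&: fpre S f b) >= 4%:R / 5%:R * unif R [set: X * Y] Rt - c) ->
  forall eps : R, 0 <= eps ->
    prt_ge S f eps ((4%:R / 5%:R - 14%:R / 5%:R * eps) / c).
Proof.
move=> F0 F1 c_gt0 disc eps _.
exists (hard_distr R S f); split; first exact: hard_distr_is_distr.
move=> eta p feas; have eta_gt0 : 0 < eta by case: feas.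
have := corruption_bound (@hard_penalty_ge0 R X Y S f)
  (hard_rect_excess disc) feas.
rewrite sum_hard_penalty // => bound.
have scaled : (4%:R / 5%:R - 14%:R / 5%:R * eps) * eta <= c by lra.
by rewrite ler_pdivlMr // mulrAC ler_pdivrMr // mul1r.
Qed.
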